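(* Let $\Gamma=\langle c\rangle\cong C_4$ and let $A$ be the $16$-dimensional Hopf algebra generated by the grouplike $c$ and elements $x,y$ with $\Delta x=x\otimes1+c\otimes x$, $\Delta y=y\otimes1+c\otimes y$, $cx=-xc$, $cy=-yc$, $xy=-yx$, $x^2=y^2=c^2-1$. Let $B$ be the $16$-dimensional Hopf algebra generated by $c$ and $x,y$ with $\Delta x=x\otimes1+c\otimes x$, $\Delta y=y\otimes1+c^3\otimes y$, $cx=-xc$, $cy=-yc$, $xy=-yx$, $x^2=y^2=c^2-1$. Then $G(A^* )\cong G(B^* )\cong C_2$ and $$\mathrm{corad}(A^* )\cong\mathrm{corad}(B^* )\cong k[C_2]\oplus\mathcal M^c(2,k)\oplus\mathcal M^c(2,k).$$
   Context: $k$ algebraically closed of characteristic $0$. $G(\cdot)$ denotes the group of grouplike elements, $\mathrm{corad}$ the coradical, and $\mathcal M^c(2,k)$ the $2\times2$ matrix coalgebra. *)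

From HB Require Import structures.
From mathcomp Require Import all_boot all_order all_algebra.
Set Implicit Arguments. Unset Strict Implicit. Unset Printing Implicit Defensive.
Import GRing.Theory.
Local Open Scope ring_scope.

Section Coalg.
Variable k : fieldType.
Variable J : finType.

Definition cvec := {ffun J -> k^o}.
Definition ctvec := {ffun (J * J)%type -> k^o}.

Record coalg := Coalg { cdelta : J -> ctvec ; ceps : J -> k }.

Definition bvec (j : J) : cvec := [ffun i => (i == j)%:R].
Definition tens (u v : cvec) : ctvec := [ffun p => u p.1 * v p.2].

Definition cDelta (C : coalg) (v : cvec) : ctvec := \sum_j v j *: cdelta C j.
Definition cEps (C : coalg) (v : cvec) : k := \sum_j v j * ceps C j.

Definition tensv (S : {vspace cvec}) : {vspace ctvec} :=
  <<[seq tens u w | u <- vbasis S, w <- vbasis S]>>%VS.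

Definition subcoalg (C : coalg) (S : {vspace cvec}) : Prop :=
  forall v, v \in S -> cDelta C v \in tensv S.

Definition simple_subcoalg (C : coalg) (S : {vspace cvec}) : Prop :=
  [/\ S != 0%VS, subcoalg C S &
      forall T, subcoalg C T -> (T <= S)%VS -> T = 0%VS \/ T = S].

(* R is the coradical: the sum of all simple subcoalgebras
   (= least subspace containing every simple subcoalgebra) *)
Definition is_coradical (C : coalg) (R : {vspace cvec}) : Prop :=
  (forall T, simple_subcoalg C T -> (T <= R)%VS) /\
  (forall R', (forall T, simple_subcoalg C T -> (T <= R')%VS) -> (R <= R')%VS).

Definition grouplike (C : coalg) (g : cvec) : Prop :=
  cDelta C g = tens g g /\ cEps C g = 1.

End Coalg.

Definition coalg_iso_onto (k : fieldType) (J J' : finType) (C : coalg k J)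
    (R : {vspace cvec k J}) (D : coalg k J') : Prop :=
  exists fm : J' -> cvec k J,
    [/\ free [seq fm j | j <- enum J'],
        (<<[seq fm j | j <- enum J']>>%VS = R),
        (forall j, cDelta C (fm j)
                   = \sum_(p : (J' * J')%type) cdelta D j p *: tens (fm p.1) (fm p.2)) &
        (forall j, cEps C (fm j) = ceps D j)].

Definition grpC (k : fieldType) (G : finType) : coalg k G :=
  Coalg (fun g => tens (bvec k g) (bvec k g)) (fun _ => 1).

Definition matC (k : fieldType) (n : nat) : coalg k ('I_n * 'I_n)%type :=
  Coalg (fun ij => \sum_(l : 'I_n) tens (bvec k (ij.1, l)) (bvec k (l, ij.2)))
        (fun ij => ((ij.1 == ij.2)%:R : k)).

Definition sumC_d1 (k : fieldType) (J1 J2 : finType) (C1 : coalg k J1) (j1 : J1)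
  (p : ((J1 + J2) * (J1 + J2))%type) : k :=
  match p.1, p.2 with inl a, inl b => cdelta C1 j1 (a, b) | _, _ => 0 end.
Definition sumC_d2 (k : fieldType) (J1 J2 : finType) (C2 : coalg k J2) (j2 : J2)
  (p : ((J1 + J2) * (J1 + J2))%type) : k :=
  match p.1, p.2 with inr a, inr b => cdelta C2 j2 (a, b) | _, _ => 0 end.
Definition sumC (k : fieldType) (J1 J2 : finType) (C1 : coalg k J1) (C2 : coalg k J2)
  : coalg k (J1 + J2)%type :=
  Coalg (fun j => match j with
                  | inl j1 => [ffun p => @sumC_d1 k J1 J2 C1 j1 p]
                  | inr j2 => [ffun p => @sumC_d2 k J1 J2 C2 j2 p]
                  end)
        (fun j => match j with inl j1 => ceps C1 j1 | inr j2 => ceps C2 j2 end).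

Definition targetC (k : fieldType) :=
  sumC (grpC k bool) (sumC (matC k 2) (matC k 2)).

(* basis c^i x^a y^b, i < 4, a b : bool *)
Definition HI := ('I_4 * bool * bool)%type.

Section H.
Variable k : fieldType.

Definition two4 : 'I_4 := inord 2.

(* left multiplication by (c^2 - 1) (c^2 is central) *)
Definition lc2 (v : cvec k HI) : cvec k HI :=
  [ffun p : HI => v (p.1.1 - two4, p.1.2, p.2)] - v.

(* product of basis elements, from cx=-xc, cy=-yc, xy=-yx, x^2=y^2=c^2-1, c^4=1:
   (c^i x^a y^b)(c^j x^a' y^b') = (-1)^((a+b)j + b a') (c^2-1)^(a a' + b b')
                                    c^(i+j) x^(a xor a') y^(b xor b') *)
Definition bmul (p q : HI) : cvec k HI :=
  let: (i, a, b) := p in let: (j, a', b') := q in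
  ((-1) ^+ ((a + b) * j + b * a')%N) *:
    iter ((a && a') + (b && b'))%N lc2 (bvec k (i + j, addb a a', addb b b')).

Definition tmul (U W : ctvec k HI) : ctvec k HI :=
  \sum_(p : (HI * HI)%type) \sum_(q : (HI * HI)%type)
     (U p * W q) *: tens (bmul p.1 q.1) (bmul p.2 q.2).

Definition hone : cvec k HI := bvec k (ord0, false, false).
Definition hcpow (i : 'I_4) : cvec k HI := bvec k (i, false, false).
Definition hx : cvec k HI := bvec k (ord0, true, false).
Definition hy : cvec k HI := bvec k (ord0, false, true).

(* comultiplication of the basis element c^i x^a y^b, as the product
   Delta(c)^i Delta(x)^a Delta(y)^b with Delta c = c(x)c, Delta x = x(x)1 + c(x)x,
   Delta y = y(x)1 + c^e(x)y *)
Definition deltaH (e : 'I_4) (p : HI) : ctvec k HI :=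
  let: (i, a, b) := p in
  tmul (tmul (iter i (tmul (tens (hcpow 1) (hcpow 1))) (tens hone hone))
             (if a then tens hx hone + tens (hcpow 1) hx else tens hone hone))
       (if b then tens hy hone + tens (hcpow e) hy else tens hone hone).

(* the dual coalgebra H^* in the dual basis: Delta of the dual basis vector i at (j,l) = coefficient of e_i in
   e_j e_l; eps(f) = f(1) *)
Definition dualC : coalg k HI :=
  Coalg (fun i => [ffun p : (HI * HI)%type => bmul p.1 p.2 i])
        (fun i => (i == (ord0, false, false))%:R).

Definition dualmul (e : 'I_4) (f g : cvec k HI) : cvec k HI :=
  [ffun i => \sum_(p : (HI * HI)%type) deltaH e i p * f p.1 * g p.2].

End H.

From HB Require Import structures.
From mathcomp Require Import all_boot all_order all_algebra.
From mathcomp Require Import ring.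
Set Implicit Arguments. Unset Strict Implicit. Unset Printing Implicit Defensive.
Import GRing.Theory.
Local Open Scope ring_scope.

(* The coalgebra structure of [H^*] is dual to the algebra structure of [H], which is the same for
   [A] and [B]; only the multiplication of [H^*] sees [e].

   Grouplikes of [H^*] are the algebra maps [H -> k]. Such a map kills [x] and [y] (because
   [cx = -xc] and [2 != 0]) and sends [c] to a square root of 1 (because [x^2 = c^2 - 1]): there are
   exactly two of them, and they multiply like [C_2].

   With [i^2 = -1], [H] has, besides these two characters, two simple modules of dimension 2 (given
   by [c |-> diag(i, -i)], [x |-> [[0, 1], [-2, 0]]], [y |-> +-[[0, i], [2i, 0]]]). The span [R]
   of the coefficient functions of these four modules is [k[C_2] (+) M^c(2,k) (+) M^c(2,k)];
   elements of [H] biorthogonal to the coefficients show that the sum is direct and that the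
   comatrix pieces are simple. Conversely, [R] is the annihilator of the ideal [J] spanned by the
   [(1 + c^2) c^j z], [z] in [x, y, xy], and [J^2] lies in a part of [J] killed by [J]; translating
   a nonzero element of a subcoalgebra by elements of [J] therefore lands in [R], so every simple
   subcoalgebra lies in [R]. The finitely many identities over the Gaussian integers behind these
   facts are checked by computation. *)

(** * Coalgebras on a finite basis *)

Section CoalgebraTheory.
Variables (k : fieldType) (J : finType).
Implicit Types (C : coalg k J) (S T : {vspace cvec k J}) (u v w f g h : cvec k J)
  (X : ctvec k J).

Lemma scalerE (a b : k) : a *: (b : k^o) = a * b. Proof. by []. Qed.

Lemma cvec_expansion v : v = \sum_j v j *: bvec k j.
Proof.
apply/ffunP => l; rewrite sum_ffunE (bigD1 l) //= big1 => [|j /negbTE nj].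
  by rewrite !ffunE eqxx scalerE mulr1 addr0.
by rewrite !ffunE eq_sym nj scalerE mulr0.
Qed.

Definition dotv u v : k := \sum_j u j * v j.

Lemma dotvC u v : dotv u v = dotv v u.
Proof. by apply: eq_bigr => j _; rewrite mulrC. Qed.

Lemma dotv_bvec u j : dotv u (bvec k j) = u j.
Proof.
rewrite /dotv (bigD1 j) //= big1 => [|i /negbTE ni]; first by rewrite ffunE eqxx mulr1 addr0.
by rewrite ffunE ni mulr0.
Qed.

Lemma dotvZ u a v : dotv u (a *: v) = a * dotv u v.
Proof. by rewrite /dotv mulr_sumr; apply: eq_bigr => j _; rewrite ffunE scalerE mulrCA. Qed.

Lemma dotvD u v w : dotv u (v + w) = dotv u v + dotv u w.
Proof. by rewrite /dotv -big_split; apply: eq_bigr => j _; rewrite ffunE mulrDr. Qed.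

Lemma dotvN u v : dotv u (- v) = - dotv u v.
Proof. by rewrite -scaleN1r dotvZ mulN1r. Qed.

Lemma dotv_sumr u (I : Type) (r : seq I) (F : I -> cvec k J) :
  dotv u (\sum_(i <- r) F i) = \sum_(i <- r) dotv u (F i).
Proof.
rewrite /dotv exchange_big; apply: eq_bigr => j _.
by rewrite sum_ffunE mulr_sumr.
Qed.

Lemma cDeltaZ C a v : cDelta C (a *: v) = a *: cDelta C v.
Proof. by rewrite /cDelta scaler_sumr; apply: eq_bigr => j _; rewrite ffunE scalerA. Qed.

Lemma cDeltaD C v w : cDelta C (v + w) = cDelta C v + cDelta C w.
Proof. by rewrite /cDelta -big_split; apply: eq_bigr => j _; rewrite ffunE scalerDl. Qed.

HB.instance Definition _ C := GRing.isSemilinear.Build k (cvec k J) (ctvec k J) _ (cDelta C)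
  (cDeltaZ C, cDeltaD C).

Lemma tens_suml (I : Type) (r : seq I) (F : I -> cvec k J) w :
  tens (\sum_(i <- r) F i) w = \sum_(i <- r) tens (F i) w.
Proof.
apply/ffunP => p; rewrite !ffunE !sum_ffunE mulr_suml.
by apply: eq_bigr => i _; rewrite ffunE.
Qed.

Lemma tens_sumr (I : Type) (r : seq I) (F : I -> cvec k J) u :
  tens u (\sum_(i <- r) F i) = \sum_(i <- r) tens u (F i).
Proof.
apply/ffunP => p; rewrite !ffunE !sum_ffunE mulr_sumr.
by apply: eq_bigr => i _; rewrite ffunE.
Qed.

Lemma tensZl a u w : tens (a *: u) w = a *: tens u w.
Proof. by apply/ffunP => p; rewrite !ffunE !scalerE mulrA. Qed.

Lemma tensZr a u w : tens u (a *: w) = a *: tens u w.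
Proof. by apply/ffunP => p; rewrite !ffunE !scalerE mulrCA. Qed.

Definition tens_col (l : J) X : cvec k J := [ffun j => X (j, l)].
Definition tens_row (j : J) X : cvec k J := [ffun l => X (j, l)].

Lemma tens_colZ l a X : tens_col l (a *: X) = a *: tens_col l X.
Proof. by apply/ffunP => j; rewrite !ffunE. Qed.
Lemma tens_colD l X X' : tens_col l (X + X') = tens_col l X + tens_col l X'.
Proof. by apply/ffunP => j; rewrite !ffunE. Qed.
Lemma tens_rowZ j a X : tens_row j (a *: X) = a *: tens_row j X.
Proof. by apply/ffunP => l; rewrite !ffunE. Qed.
Lemma tens_rowD j X X' : tens_row j (X + X') = tens_row j X + tens_row j X'.
Proof. by apply/ffunP => l; rewrite !ffunE. Qed.

HB.instance Definition _ l := GRing.isSemilinear.Build k (ctvec k J) (cvec k J) _ (tens_col l)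
  (tens_colZ l, tens_colD l).
HB.instance Definition _ j := GRing.isSemilinear.Build k (ctvec k J) (cvec k J) _ (tens_row j)
  (tens_rowZ j, tens_rowD j).

Lemma tens_col_tens l u w : tens_col l (tens u w) = w l *: u.
Proof. by apply/ffunP => j; rewrite !ffunE /= scalerE mulrC. Qed.

Lemma tens_row_tens j u w : tens_row j (tens u w) = u j *: w.
Proof. by apply/ffunP => l; rewrite !ffunE. Qed.

Lemma memv_tens S u w : u \in S -> w \in S -> tens u w \in tensv S.
Proof.
move=> /coord_vbasis -> /coord_vbasis ->.
rewrite tens_suml; apply: memv_suml => i _; rewrite tensZl; apply: memvZ.
rewrite tens_sumr; apply: memv_suml => j _; rewrite tensZr; apply: memvZ.
by apply/memv_span/allpairs_f; apply: mem_nth; rewrite size_tuple.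
Qed.

Lemma tensv_slices S X :
  X \in tensv S -> (forall l, tens_col l X \in S) /\ (forall j, tens_row j X \in S).
Proof.
move=> /(@coord_span _ _ _ (in_tuple _)) ->; set s := [seq _ | _ <- _, _ <- _].
have slices_in (i : 'I_(size s)) :
    (forall l, tens_col l s`_i \in S) /\ (forall j, tens_row j s`_i \in S).
  have /allpairsP[[u w] [/= /vbasis_mem uS /vbasis_mem wS ->]] : s`_i \in s by apply: mem_nth.
  by split=> ?; rewrite ?tens_col_tens ?tens_row_tens memvZ.
split=> [l|j]; rewrite linear_sum; apply: memv_suml => i _; rewrite linearZ; apply: memvZ;
  by [apply: (slices_in i).1 | apply: (slices_in i).2].
Qed.

(* A tensor whose columns lie in [S] is [sum_r b_r (x) w_r] over a basis [b] of [S]; when its rows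
   lie in [S] too, each [w_r] is a combination of rows. *)
Lemma slices_tensv S X :
  (forall l, tens_col l X \in S) -> (forall j, tens_row j X \in S) -> X \in tensv S.
Proof.
move=> colS rowS; pose b := vbasis S.
pose w (r : 'I_(\dim S)) := \sum_j coord b r (bvec k j) *: tens_row j X.
have -> : X = \sum_(r < \dim S) tens b`_r (w r).
  apply/ffunP => -[j l]; rewrite sum_ffunE.
  transitivity (tens_col l X j); first by rewrite ffunE.
  rewrite (coord_vbasis (colS l)) sum_ffunE; apply: eq_bigr => r _.
  rewrite !ffunE sum_ffunE /= scalerE mulrC; congr (_ * _).
  rewrite {1}(cvec_expansion (tens_col l X)) linear_sum.
  by apply: eq_bigr => i _; rewrite linearZ !ffunE scalerE mulrC.
apply: memv_suml => r _; apply: memv_tens; first by apply/vbasis_mem/mem_nth; rewrite size_tuple.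
by apply: memv_suml => j _; apply: memvZ.
Qed.

Lemma tensvP S X :
  X \in tensv S <-> (forall l, tens_col l X \in S) /\ (forall j, tens_row j X \in S).
Proof. by split=> [/tensv_slices | [/slices_tensv]]. Qed.

Lemma subcoalg_span C (s : seq (cvec k J)) :
  (forall x, x \in s -> cDelta C x \in tensv <<s>>) -> subcoalg C <<s>>.
Proof.
move=> Ds v /(@coord_span _ _ _ (in_tuple _)) ->; rewrite linear_sum; apply: memv_suml => i _.
by rewrite linearZ; apply/memvZ/Ds/mem_nth.
Qed.

Lemma subcoalgI C S T : subcoalg C S -> subcoalg C T -> subcoalg C (S :&: T).
Proof.
move=> subS subT v; rewrite memv_cap => /andP[/subS/tensvP[cS rS] /subT/tensvP[cT rT]].
by apply/tensvP; split=> ?; rewrite memv_cap ?cS ?cT ?rS ?rT.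
Qed.

(* [contractR C h f] and [contractL C h f] pair the right, resp. left, tensor factor of [Delta f]
   with [h]; in the dual of an algebra these are the two translation actions of [h]. *)
Definition contractR C h f : cvec k J := [ffun i => \sum_l h l * cDelta C f (i, l)].
Definition contractL C h f : cvec k J := [ffun l => \sum_i h i * cDelta C f (i, l)].

Lemma contractR_slices C h f : contractR C h f = \sum_l h l *: tens_col l (cDelta C f).
Proof. by apply/ffunP => i; rewrite !ffunE sum_ffunE; apply: eq_bigr => l _; rewrite !ffunE. Qed.

Lemma contractL_slices C h f : contractL C h f = \sum_i h i *: tens_row i (cDelta C f).
Proof. by apply/ffunP => l; rewrite !ffunE sum_ffunE; apply: eq_bigr => i _; rewrite !ffunE. Qed.

Lemma contractR_is_semilinear C h : semilinear (contractR C h).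
Proof.
split=> [a f|f g]; rewrite !contractR_slices.
  by rewrite scaler_sumr; apply: eq_bigr => l _; rewrite cDeltaZ tens_colZ !scalerA mulrC.
by rewrite -big_split; apply: eq_bigr => l _; rewrite cDeltaD tens_colD scalerDr.
Qed.

Lemma contractL_is_semilinear C h : semilinear (contractL C h).
Proof.
split=> [a f|f g]; rewrite !contractL_slices.
  by rewrite scaler_sumr; apply: eq_bigr => i _; rewrite cDeltaZ tens_rowZ !scalerA mulrC.
by rewrite -big_split; apply: eq_bigr => i _; rewrite cDeltaD tens_rowD scalerDr.
Qed.

HB.instance Definition _ C h := GRing.isSemilinear.Build k (cvec k J) (cvec k J) _ (contractR C h)
  (contractR_is_semilinear C h).
HB.instance Definition _ C h := GRing.isSemilinear.Build k (cvec k J) (cvec k J) _ (contractL C h)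
  (contractL_is_semilinear C h).

Lemma memv_contractR C S h f : subcoalg C S -> f \in S -> contractR C h f \in S.
Proof.
move=> subS /subS /tensvP[colS _]; rewrite contractR_slices.
by apply: memv_suml => l _; apply: memvZ.
Qed.

Lemma memv_contractL C S h f : subcoalg C S -> f \in S -> contractL C h f \in S.
Proof.
move=> subS /subS /tensvP[_ rowS]; rewrite contractL_slices.
by apply: memv_suml => i _; apply: memvZ.
Qed.

Lemma contractR_tens C h f (I : finType) (U W : I -> cvec k J) :
  cDelta C f = \sum_r tens (U r) (W r) -> contractR C h f = \sum_r dotv (W r) h *: U r.
Proof.
move=> Df; rewrite contractR_slices Df.
under eq_bigr do rewrite linear_sum scaler_sumr.
rewrite exchange_big; apply: eq_bigr => r _; rewrite /dotv scaler_suml.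
by apply: eq_bigr => l _; rewrite /= tens_col_tens scalerA mulrC.
Qed.

Lemma contractL_tens C h f (I : finType) (U W : I -> cvec k J) :
  cDelta C f = \sum_r tens (U r) (W r) -> contractL C h f = \sum_r dotv (U r) h *: W r.
Proof.
move=> Df; rewrite contractL_slices Df.
under eq_bigr do rewrite linear_sum scaler_sumr.
rewrite exchange_big; apply: eq_bigr => r _; rewrite /dotv scaler_suml.
by apply: eq_bigr => i _; rewrite /= tens_row_tens scalerA mulrC.
Qed.

End CoalgebraTheory.

Section SimpleSubcoalgebras.
Variables (k : fieldType) (J : finType) (C : coalg k J).
Implicit Types (S T : {vspace cvec k J}) (f g : cvec k J).

Lemma grouplike_line_simple g : g != 0 -> cDelta C g = tens g g -> simple_subcoalg C <[g]>.
Proof.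
move=> g_neq0 Dg; split.
- by rewrite -dimv_eq0 dim_vline g_neq0.
- rewrite -span_seq1; apply: subcoalg_span => x; rewrite inE => /eqP ->.
  by rewrite Dg span_seq1 memv_tens ?memv_line.
- move=> T _ sTg; have [->|T_neq0] := eqVneq T 0%VS; [by left | right].
  apply/eqP; rewrite eqEdim sTg dim_vline g_neq0 /= lt0n dimv_eq0.
  exact: T_neq0.
Qed.

Lemma simple_sub_meet S :
    subcoalg C S -> (forall T, subcoalg C T -> T != 0%VS -> (T :&: S)%VS != 0%VS) ->
  forall T, simple_subcoalg C T -> (T <= S)%VS.
Proof.
move=> subS meetS T [T_neq0 subT minT].
case: (minT _ (subcoalgI subT subS) (capvSl T S)) => [TS0 | <-]; last exact: capvSr.
by move: (meetS T subT T_neq0); rewrite TS0 eqxx.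
Qed.

Lemma is_coradical_span (s : seq (cvec k J)) :
    (forall x, x \in s -> exists2 T, simple_subcoalg C T & x \in T) ->
    (forall T, simple_subcoalg C T -> (T <= <<s>>)%VS) ->
  is_coradical C <<s>>.
Proof.
move=> cover_s simple_le; split=> // R simple_leR; apply/span_subvP => x /cover_s[T simT xT].
exact: subvP (simple_leR T simT) _ xT.
Qed.

End SimpleSubcoalgebras.

Section Biorthogonal.
Variables (k : fieldType) (J I : finType) (F D : I -> cvec k J) (c : k).
Hypotheses (c_neq0 : c != 0) (FD : forall a b, dotv (F a) (D b) = (a == b)%:R * c).

Lemma biorth_expansion g : g \in <<codom F>>%VS -> g = c^-1 *: \sum_a dotv g (D a) *: F a.
Proof.
have expF b : F b = c^-1 *: \sum_a dotv (F b) (D a) *: F a.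
  rewrite (bigD1 b) //= big1 => [|a /negbTE ab]; last by rewrite FD eq_sym ab mul0r scale0r.
  by rewrite FD eqxx mul1r addr0 scalerA mulVf // scale1r.
move=> gS; have {1 2}-> := @coord_span _ _ _ (in_tuple (codom F)) g gS.
under [in RHS]eq_bigr do rewrite dotvC dotv_sumr scaler_suml.
rewrite exchange_big scaler_sumr; apply: eq_bigr => i _ /=.
have /codomP[b ->] : (codom F)`_i \in codom F by apply: mem_nth.
rewrite {1}expF !scaler_sumr; apply: eq_bigr => a _.
by rewrite dotvZ dotvC !scalerA; congr (_ *: _); ring.
Qed.

Lemma free_biorth : free (codom F).
Proof.
apply/freeP => x sum0 i.
have nth_codom (j : 'I_#|I|) : (codom_tuple F)`_j = F (enum_val j).
  by rewrite /= (nth_map (enum_default j)) // -cardE ltn_ord.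
have /eqP := congr1 (fun u => dotv u (D (enum_val i))) sum0.
rewrite dotvC dotv_sumr (bigD1 i) //= big1 => [|j ji].
  rewrite addr0 dotvZ dotvC nth_codom FD eqxx mul1r /dotv big1 => [|? _]; last first.
    by rewrite ffunE mul0r.
  by rewrite mulf_eq0 (negbTE c_neq0) orbF => /eqP.
by rewrite dotvZ dotvC nth_codom FD (inj_eq enum_val_inj) (negbTE ji) mul0r mulr0.
Qed.

End Biorthogonal.

(* The comatrix subcoalgebra spanned by matrix coefficients [F (i, j)], detected by functionals [D]
   biorthogonal to them: the two contractions with [D] move any nonzero element of a subcoalgebra to
   a nonzero multiple of any prescribed [F (p, q)]. *)
Section Comatrix.
Variables (k : fieldType) (J : finType) (C : coalg k J) (n : nat).
Variables (F D : 'I_n.+1 * 'I_n.+1 -> cvec k J) (c : k).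
Hypotheses (c_neq0 : c != 0)
  (DeltaF : forall i j, cDelta C (F (i, j)) = \sum_l tens (F (i, l)) (F (l, j)))
  (FD : forall a b, dotv (F a) (D b) = (a == b)%:R * c).

Lemma contractR_comatrix i j q w :
  contractR C (D (q, w)) (F (i, j)) = ((j == w)%:R * c) *: F (i, q).
Proof.
rewrite (contractR_tens _ (DeltaF i j)) (bigD1 q) //= big1 => [|l /negbTE lq].
  by rewrite FD xpair_eqE eqxx addr0.
by rewrite FD xpair_eqE lq mul0r scale0r.
Qed.

Lemma contractL_comatrix i q u p :
  contractL C (D (u, p)) (F (i, q)) = ((i == u)%:R * c) *: F (p, q).
Proof.
rewrite (contractL_tens _ (DeltaF i q)) (bigD1 p) //= big1 => [|l /negbTE lp].
  by rewrite FD xpair_eqE eqxx andbT addr0.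
by rewrite FD xpair_eqE lp andbF mul0r scale0r.
Qed.

Lemma contractLR_comatrix g u w p q : g \in <<codom F>>%VS ->
  contractL C (D (u, p)) (contractR C (D (q, w)) g) = (c * dotv g (D (u, w))) *: F (p, q).
Proof.
move=> /(biorth_expansion c_neq0 FD) {1}->.
rewrite !linearZ !linear_sum (bigD1 (u, w)) //= big1 => [|[i j] ij_uw]; last first.
  rewrite !linearZ /= contractR_comatrix linearZ /= contractL_comatrix !scalerA.
  case: eqP => [jw | _]; last by rewrite !(mul0r, mulr0) scale0r.
  case: eqP => [iu | _]; last by rewrite !(mul0r, mulr0) scale0r.
  by rewrite iu jw eqxx in ij_uw.
rewrite !linearZ /= contractR_comatrix linearZ /= contractL_comatrix !eqxx !mul1r addr0.
by rewrite !scalerA; congr (_ *: _); field.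
Qed.

Lemma comatrix_span_simple : simple_subcoalg C <<codom F>>.
Proof.
have FS ij : F ij \in <<codom F>>%VS by apply/memv_span/codom_f.
split.
- apply/eqP => S0; have := FD (ord0, ord0) (ord0, ord0).
  move: (FS (ord0, ord0)); rewrite S0 memv0 => /eqP ->.
  rewrite eqxx mul1r /dotv big1 => [/esym/eqP|? _]; first by rewrite (negbTE c_neq0).
  by rewrite ffunE mul0r.
- apply: subcoalg_span => _ /codomP[[i j] ->]; rewrite DeltaF.
  by apply: memv_suml => l _; rewrite memv_tens.
move=> T subT sTS; have [->|T_neq0] := eqVneq T 0%VS; [by left | right].
apply/eqP; rewrite eqEsubv sTS /=; apply/span_subvP => _ /codomP[[p q] ->].
have fT := memv_pick T; have f_neq0 : vpick T != 0 by rewrite vpick0.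
have [[u w] fD_neq0] : exists uw, dotv (vpick T) (D uw) != 0.
  apply/existsP; move: f_neq0; apply: contraNT => /existsPn fD0; apply/eqP.
  rewrite (biorth_expansion c_neq0 FD (subvP sTS _ fT)) big1 ?scaler0 // => uw _.
  by move: (fD0 uw); rewrite negbK => /eqP ->; rewrite scale0r.
rewrite -[F (p, q)](scalerK (mulf_neq0 c_neq0 fD_neq0)).
rewrite -(contractLR_comatrix u w p q (subvP sTS _ fT)).
by apply/memvZ/memv_contractL/memv_contractR.
Qed.

End Comatrix.

Lemma dual_basis_expansion (k : fieldType) (J I : finType) (F D : I -> cvec k J) (c : k) :
    (forall i i', \sum_b D b i' * F b i = c * (i' == i)%:R) ->
  forall g, c *: g = \sum_b dotv g (D b) *: F b.
Proof.
move=> dual g; apply/ffunP => i; rewrite ffunE sum_ffunE scalerE.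
under eq_bigr do rewrite ffunE scalerE /dotv mulr_suml.
rewrite exchange_big /=.
under eq_bigr do (under eq_bigr do rewrite -mulrA; rewrite -mulr_sumr dual).
rewrite (bigD1 i) //= big1 => [|i' /negbTE i'i]; last by rewrite i'i !mulr0.
by rewrite eqxx mulr1 addr0 mulrC.
Qed.

Lemma big_pair_sumType (I1 I2 : finType) (V : nmodType) (H : (I1 + I2) * (I1 + I2) -> V) :
  \sum_p H p = \sum_(p : I1 * I1) H (inl p.1, inl p.2) + \sum_(p : I1 * I2) H (inl p.1, inr p.2)
              + (\sum_(p : I2 * I1) H (inr p.1, inl p.2) + \sum_(p : I2 * I2) H (inr p.1, inr p.2)).
Proof.
rewrite (eq_bigr (fun p => H (p.1, p.2))) => [|[] //].
rewrite -(pair_bigA _ (fun x y => H (x, y))) big_sumType /=.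
under eq_bigr do rewrite big_sumType.
under [X in _ + X]eq_bigr do rewrite big_sumType.
by rewrite /= !big_split /= !pair_bigA.
Qed.

Section CoalgebraMaps.
Variables (k : fieldType) (J : finType) (C : coalg k J).

Definition is_coalg_map (J' : finType) (D : coalg k J') (fm : J' -> cvec k J) : Prop :=
  (forall j, cDelta C (fm j) = \sum_(p : (J' * J')%type) cdelta D j p *: tens (fm p.1) (fm p.2)) /\
  (forall j, cEps C (fm j) = ceps D j).

Lemma coalg_iso_ontoP (J' : finType) (D : coalg k J') (fm : J' -> cvec k J) :
  free (codom fm) -> is_coalg_map D fm -> coalg_iso_onto C <<codom fm>> D.
Proof. by move=> free_fm [Dfm efm]; exists fm. Qed.

Lemma sum_tens_bvec (J' : finType) (V : lmodType k) (G : J' * J' -> V) a b :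
  \sum_(p : (J' * J')%type) tens (bvec k a) (bvec k b) p *: G p = G (a, b).
Proof.
rewrite (bigD1 (a, b)) //= big1 => [|[x y] /negbTE xy_ab].
  by rewrite !ffunE /= !eqxx mulr1 scale1r addr0.
by rewrite !ffunE /= -natrM mulnb -xpair_eqE xy_ab scale0r.
Qed.

Lemma is_coalg_map_grpC (G : finType) (fm : G -> cvec k J) :
  (forall g, grouplike C (fm g)) -> is_coalg_map (grpC k G) fm.
Proof. by move=> gl; split=> g; [rewrite sum_tens_bvec; case: (gl g) | case: (gl g)]. Qed.

Lemma is_coalg_map_matC n (fm : 'I_n * 'I_n -> cvec k J) :
    (forall i j, cDelta C (fm (i, j)) = \sum_l tens (fm (i, l)) (fm (l, j))) ->
    (forall i j, cEps C (fm (i, j)) = (i == j)%:R) ->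
  is_coalg_map (matC k n) fm.
Proof.
move=> Dfm efm; split=> -[i j] //=; rewrite Dfm.
under eq_bigr do rewrite sum_ffunE scaler_suml.
by rewrite exchange_big; apply: eq_bigr => l _; rewrite sum_tens_bvec.
Qed.

Lemma is_coalg_map_sumC (J1 J2 : finType) (D1 : coalg k J1) (D2 : coalg k J2)
    (fm : J1 + J2 -> cvec k J) :
    is_coalg_map D1 (fun a => fm (inl a)) -> is_coalg_map D2 (fun b => fm (inr b)) ->
  is_coalg_map (sumC D1 D2) fm.
Proof.
move=> [Df1 ef1] [Df2 ef2]; split=> [[a|b]|[a|b]] //=; rewrite big_pair_sumType.
all: rewrite ?Df1 ?Df2 [X in _ + X + _]big1 ?addr0 => [|p _]; rewrite ?ffunE /= ?scale0r //.
  rewrite [X in _ + (X + _)]big1 ?add0r => [|p _]; rewrite ?ffunE /= ?scale0r //.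
  rewrite [X in _ + X]big1 ?addr0 => [|p _]; rewrite ?ffunE /= ?scale0r //.
  by apply: eq_bigr => -[x y] _; rewrite ffunE.
rewrite [in RHS]big1 ?add0r => [|p _]; rewrite ?ffunE /= ?scale0r //.
rewrite [in RHS]big1 ?add0r => [|p _]; rewrite ?ffunE /= ?scale0r //.
by apply: eq_bigr => -[x y] _; rewrite ffunE.
Qed.

End CoalgebraMaps.

(** * The dual coalgebra [H^*] *)

Notation hunit := (ord0, false, false).

Section DualCoalgebra.
Variable k : fieldType.
Implicit Types (f g h u w : cvec k HI) (p q t : HI).

Lemma cDelta_dualE f p q : cDelta (dualC k) f (p, q) = dotv f (bmul k p q).
Proof. by rewrite /cDelta sum_ffunE; apply: eq_bigr => i _; rewrite !ffunE. Qed.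

Lemma cEps_dualE f : cEps (dualC k) f = f hunit.
Proof.
rewrite /cEps (bigD1 hunit) //= big1 => [|i ni]; first by rewrite mulr1 addr0.
by rewrite (negbTE ni) mulr0.
Qed.

Lemma bmul_cpowl i q : bmul k (i, false, false) q = bvec k (i + q.1.1, q.1.2, q.2).
Proof. by case: q => [[j a] b]; rewrite /bmul /= mul0n expr0 scale1r. Qed.

Lemma bmul_unitl q : bmul k hunit q = bvec k q.
Proof. by rewrite bmul_cpowl add0r; case: q => [[]]. Qed.

(* Elements of [H] and of [H^*] are both coordinate vectors in the basis [HI], paired by [dotv];
   [hmul] is the product of [H]. *)
Definition hmul u w : cvec k HI := \sum_p \sum_q (u p * w q) *: bmul k p q.

Lemma dotv_contractR_dual h h' f : dotv (contractR (dualC k) h f) h' = dotv f (hmul h' h).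
Proof.
rewrite /hmul dotv_sumr; under [RHS]eq_bigr do rewrite dotv_sumr.
rewrite {1}/dotv; apply: eq_bigr => p _; rewrite ffunE mulr_suml; apply: eq_bigr => q _.
by rewrite dotvZ cDelta_dualE mulrC mulrA.
Qed.

Lemma contractR_dual_unit h f : contractR (dualC k) h f hunit = dotv f h.
Proof.
rewrite ffunE; apply: eq_bigr => l _.
by rewrite cDelta_dualE bmul_unitl dotv_bvec mulrC.
Qed.

Definition hmultiplicative f : Prop := forall p q, dotv f (bmul k p q) = f p * f q.

Lemma grouplike_dualP g : grouplike (dualC k) g <-> hmultiplicative g /\ g hunit = 1.
Proof.
rewrite /grouplike cEps_dualE; split=> -[Dg g1]; split=> //.
  by move=> p q; rewrite -cDelta_dualE Dg ffunE.
by apply/ffunP => -[p q]; rewrite cDelta_dualE Dg ffunE.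
Qed.

Definition chi (s : bool) : cvec k HI :=
  [ffun t : HI => if t.1.2 || t.2 then 0 else ((-1) ^+ s) ^+ t.1.1].

Lemma lc2_bvec i a b : lc2 (bvec k (i, a, b)) = bvec k (i + two4, a, b) - bvec k (i, a, b).
Proof.
apply/ffunP => -[[j a'] b']; rewrite !ffunE /= !xpair_eqE.
by rewrite (can2_eq (subrK two4) (addrK two4)).
Qed.

Lemma bmul_xy a b : bmul k (ord0, a, false) (ord0, false, b) = bvec k (ord0, a, b).
Proof. by rewrite /bmul /= !(muln0, andbF, addn0, addbF) expr0 scale1r add0r. Qed.

Lemma bmul_gen_c a b : a (+) b -> bmul k (ord0, a, b) (1, false, false) = - bvec k (1, a, b).
Proof. by case: a; case: b => //= _; rewrite /bmul /= add0r scaleN1r. Qed.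

Lemma bmul_xx :
  bmul k (ord0, true, false) (ord0, true, false) = bvec k (two4, false, false) - bvec k hunit.
Proof. by rewrite /bmul /= expr0 scale1r lc2_bvec !add0r. Qed.

Section Grouplikes.
Variable g : cvec k HI.
Hypotheses (two_neq0 : (2%:R : k) != 0) (g_mult : hmultiplicative g) (g1 : g hunit = 1).

Let gm p q : g p * g q = dotv g (bmul k p q). Proof. by rewrite g_mult. Qed.

Lemma grouplike_dual_cpow (i : 'I_4) : g (i, false, false) = g (1, false, false) ^+ i.
Proof.
case: i => n; elim: n => [|n IH] lt_n4.
  by rewrite expr0 -g1 (_ : Ordinal lt_n4 = ord0) //; apply: val_inj.
rewrite exprS -(IH (ltnW lt_n4)) gm bmul_cpowl dotv_bvec /=.
by rewrite (_ : _ + _ = Ordinal lt_n4) //; apply: val_inj; rewrite /= modn_small.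
Qed.

(* For [z = x, y]: [zc = -cz] gives [2 g(c) g(z) = 0], and [g(c)] is invertible as [c^4 = 1]. *)
Lemma grouplike_dual_gen a b : a (+) b -> g (ord0, a, b) = 0.
Proof.
move=> ab; set gc := g (1, false, false).
have gc_neq0 : gc != 0.
  apply/eqP => gc0; move: (gm (1, false, false) (Ordinal (isT : (3 < 4)%N), false, false)).
  rewrite -/gc gc0 mul0r bmul_cpowl dotv_bvec (_ : _ + _ = ord0) ?g1; last exact: val_inj.
  by move/eqP; rewrite eq_sym oner_eq0.
have cg := gm (1, false, false) (ord0, a, b); rewrite bmul_cpowl dotv_bvec addr0 in cg.
have gc_anti := gm (ord0, a, b) (1, false, false).
rewrite bmul_gen_c // -scaleN1r dotvZ dotv_bvec mulN1r mulrC -cg -/gc in gc_anti.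
have : (gc * g (ord0, a, b)) *+ 2 == 0 by rewrite mulr2n {1}gc_anti addNr.
by rewrite -mulr_natl !mulf_eq0 (negbTE two_neq0) (negbTE gc_neq0) => /eqP.
Qed.

Lemma grouplike_dual_chi : exists s, g = chi s.
Proof.
have gx := grouplike_dual_gen (a := true) (b := false) isT.
have gy := grouplike_dual_gen (a := false) (b := true) isT.
have gc2 : g (1, false, false) ^+ 2 = 1.
  have := gm (ord0, true, false) (ord0, true, false).
  rewrite gx mul0r bmul_xx dotvD dotvN !dotv_bvec g1 grouplike_dual_cpow.
  by rewrite /two4 inordK // => /esym/eqP; rewrite subr_eq0 => /eqP.
have [s gcs] : exists s : bool, g (1, false, false) = (-1) ^+ s.
  by move/eqP: gc2; rewrite sqrf_eq1 => /orP[] /eqP ->; [exists false | exists true].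
exists s; apply/ffunP => -[[i a] b].
have -> : g (i, a, b) = g (i, false, false) * (g (ord0, a, false) * g (ord0, false, b)).
  by rewrite gm bmul_xy dotv_bvec gm bmul_cpowl dotv_bvec addr0.
rewrite grouplike_dual_cpow gcs ffunE /=.
by case: a; case: b; rewrite ?gx ?gy ?g1 ?(mulr0, mul0r, mulr1).
Qed.

End Grouplikes.

End DualCoalgebra.

Section DualMultiplication.
Variables (k : fieldType) (f g : cvec k HI).
Hypotheses (f_alg : hmultiplicative f) (g_alg : hmultiplicative g).

Definition tens_eval (U : ctvec k HI) : k := \sum_P U P * f P.1 * g P.2.

Lemma tens_eval_tens u w : tens_eval (tens u w) = dotv f u * dotv g w.
Proof.
rewrite /tens_eval (eq_bigr (fun P => tens u w (P.1, P.2) * f P.1 * g P.2)) => [|[] //].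
rewrite -(pair_bigA _ (fun a b => tens u w (a, b) * f a * g b)) /= /dotv mulr_suml.
by apply: eq_bigr => a _; rewrite mulr_sumr; apply: eq_bigr => b _; rewrite ffunE /=; ring.
Qed.

Lemma tens_evalD U W : tens_eval (U + W) = tens_eval U + tens_eval W.
Proof. by rewrite /tens_eval -big_split; apply: eq_bigr => P _; rewrite ffunE !mulrDl. Qed.

Lemma tens_evalZ a U : tens_eval (a *: U) = a * tens_eval U.
Proof. by rewrite /tens_eval mulr_sumr; apply: eq_bigr => P _; rewrite ffunE scalerE !mulrA. Qed.

Lemma tens_eval_sum (I : Type) (r : seq I) (F : I -> ctvec k HI) :
  tens_eval (\sum_(i <- r) F i) = \sum_(i <- r) tens_eval (F i).
Proof.
elim: r => [|x r IH]; rewrite ?big_nil ?big_cons ?tens_evalD ?IH //.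
by rewrite -(scale0r 0) tens_evalZ mul0r.
Qed.

Lemma tens_eval_tmul U W : tens_eval (tmul U W) = tens_eval U * tens_eval W.
Proof.
rewrite /tmul tens_eval_sum; under eq_bigr do rewrite tens_eval_sum.
under eq_bigr do under eq_bigr do rewrite tens_evalZ tens_eval_tens f_alg g_alg.
rewrite /tens_eval mulr_suml; apply: eq_bigr => P _; rewrite mulr_sumr.
by apply: eq_bigr => Q _; ring.
Qed.

Lemma tens_eval_iter n U W : tens_eval (iter n (tmul U) W) = tens_eval U ^+ n * tens_eval W.
Proof. by elim: n => [|n IH]; rewrite ?expr0 ?mul1r // iterS tens_eval_tmul IH exprS mulrA. Qed.

Lemma dualmulE e t : dualmul e f g t = tens_eval (deltaH k e t).
Proof. by rewrite ffunE. Qed.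

End DualMultiplication.

Definition ord4 (n : nat) : 'I_4 := Ordinal (ltn_pmod n (isT : (0 < 4)%N)).
Definition ord2 (n : nat) : 'I_2 := Ordinal (ltn_pmod n (isT : (0 < 2)%N)).

Lemma ord4K (i : 'I_4) : ord4 i = i.
Proof. by apply: val_inj; rewrite /= modn_small. Qed.
Lemma ord2K (i : 'I_2) : ord2 i = i.
Proof. by apply: val_inj; rewrite /= modn_small. Qed.

Lemma sum_enum_seq (T : finType) (s : seq T) (V : nmodType) (F : T -> V) :
  uniq s -> (forall x, x \in s) -> \sum_(i : T) F i = \sum_(i <- s) F i.
Proof.
move=> s_uniq s_full; apply/perm_big/uniq_perm; rewrite ?index_enum_uniq //.
by move=> x; rewrite mem_index_enum s_full.
Qed.

Definition bools := [:: false; true].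
Definition ords2 : seq 'I_2 := [:: ord2 0; ord2 1].
Definition allHI : seq HI :=
  [seq (ord4 n, ab.1, ab.2) | n <- iota 0 4, ab <- [seq (a, b) | a <- bools, b <- bools]].

Notation corad_index := (bool + ('I_2 * 'I_2 + 'I_2 * 'I_2))%type.
Definition allI2 : seq ('I_2 * 'I_2) := [seq (m, n) | m <- ords2, n <- ords2].
Definition all_corad_index : seq corad_index :=
  [seq inl s | s <- bools] ++ [seq inr (inl mn) | mn <- allI2] ++ [seq inr (inr mn) | mn <- allI2].

Lemma mem_bools (s : bool) : s \in bools. Proof. by case: s. Qed.
Lemma mem_ords2 (m : 'I_2) : m \in ords2. Proof. by rewrite -(ord2K m); case: m => -[|[|]]. Qed.

Lemma mem_allHI (t : HI) : t \in allHI.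
Proof.
by case: t => -[i a] b; rewrite -(ord4K i); case: i => -[|[|[|[|]]]] //; case: a; case: b.
Qed.

Lemma mem_allI2 (mn : 'I_2 * 'I_2) : mn \in allI2.
Proof.
by case: mn => m n; rewrite -(ord2K m) -(ord2K n); case: m => -[|[|]]; case: n => -[|[|]].
Qed.

Lemma mem_all_corad_index (j : corad_index) : j \in all_corad_index.
Proof.
by rewrite !mem_cat; case: j => [s|[mn|mn]]; rewrite map_f ?mem_bools ?mem_allI2 ?orbT.
Qed.

Lemma sum_allHI (V : nmodType) (F : HI -> V) : \sum_(t : HI) F t = \sum_(t <- allHI) F t.
Proof. exact/sum_enum_seq/mem_allHI. Qed.

Lemma sum_all_corad_index (V : nmodType) (F : corad_index -> V) :
  \sum_(j : corad_index) F j = \sum_(j <- all_corad_index) F j.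
Proof. exact/sum_enum_seq/mem_all_corad_index. Qed.

(* Gaussian integers [a + b i], mapped below into any field containing a square root of -1. *)
Definition gauss := (int * int)%type.
Definition gint (n : int) : gauss := (n, 0).
Definition gadd (x y : gauss) : gauss := (x.1 + y.1, x.2 + y.2).
Definition gmul (x y : gauss) : gauss := (x.1 * y.1 - x.2 * y.2, x.1 * y.2 + x.2 * y.1).
Definition gsum {T} (s : seq T) (F : T -> gauss) : gauss :=
  foldr (fun x acc => gadd (F x) acc) (gint 0) s.
Definition zsum {T} (s : seq T) (F : T -> int) : int := foldr (fun x acc => F x + acc) 0 s.
Arguments gsum {T} s F : simpl never.
Arguments zsum {T} s F : simpl never.

Section GaussianEmbedding.
Variables (k : fieldType) (io : k).
Hypothesis io2 : io ^+ 2 = -1.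

Definition gI (x : gauss) : k := x.1%:~R + x.2%:~R * io.

Lemma gI_int n : gI (gint n) = n%:~R.
Proof. by rewrite /gI mul0r addr0. Qed.

Lemma gI_add x y : gI (gadd x y) = gI x + gI y.
Proof. by rewrite /gI !rmorphD /=; ring. Qed.

Lemma gI_mul x y : gI (gmul x y) = gI x * gI y.
Proof.
rewrite /gI !(rmorphD, rmorphN, rmorphM) /=.
have -> : - (x.2%:~R * y.2%:~R) = x.2%:~R * y.2%:~R * io ^+ 2 :> k by rewrite io2 mulrN1.
by ring.
Qed.

Lemma gI_gsum (T : Type) (s : seq T) (F : T -> gauss) : gI (gsum s F) = \sum_(x <- s) gI (F x).
Proof. by elim: s => [|x s IH]; rewrite ?big_nil ?gI_int // big_cons gI_add IH. Qed.

End GaussianEmbedding.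

Lemma intr_zsum (k : fieldType) (T : Type) (s : seq T) (F : T -> int) :
  (zsum s F)%:~R = \sum_(x <- s) (F x)%:~R :> k.
Proof. by elim: s => [|x s IH]; rewrite ?big_nil // big_cons -IH rmorphD. Qed.

(* An integer copy of [bmul] that evaluates under [vm_compute]. *)
Definition bvZ (t r : HI) : int := (r == t)%:R.
Definition lc2Z (f : HI -> int) (r : HI) : int := f (ord4 (r.1.1 + 2), r.1.2, r.2) - f r.
Definition bmulZ (p q : HI) : HI -> int :=
  let: (i, a, b) := p in let: (j, a', b') := q in
  fun r => (-1) ^+ ((a + b) * j + b * a')%N *
    iter ((a && a') + (b && b'))%N lc2Z (bvZ (ord4 (i + j), addb a a', addb b b')) r.
Arguments bmulZ : simpl never.

Lemma bmulE (k : fieldType) (p q r : HI) : bmul k p q r = (bmulZ p q r)%:~R.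
Proof.
have bvecE t r' : bvec k t r' = (bvZ t r')%:~R by rewrite ffunE /bvZ; case: (r' == t).
have iterE n (v : cvec k HI) (f : HI -> int) : (forall r', v r' = (f r')%:~R) ->
    forall r', iter n (@lc2 k) v r' = (iter n lc2Z f r')%:~R.
  move=> vE; elim: n => [|n IH] r' //; rewrite !iterS /lc2 {2}/lc2Z !ffunE !IH rmorphB.
  have -> : r'.1.1 - two4 = ord4 (r'.1.1 + 2) by apply: val_inj; rewrite /= /two4 inordK.
  by [].
case: p => -[i a] b; case: q => -[j a'] b'; rewrite /bmul /bmulZ ffunE scalerE.
rewrite (iterE _ _ (bvZ (ord4 (i + j), a (+) a', b (+) b'))) => [|r'].
  by rewrite rmorphM /= intr_sign.
by rewrite bvecE (_ : i + j = ord4 (i + j)) //; apply: val_inj.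
Qed.

Definition chiZ (s : bool) (t : HI) : int := if t.1.2 || t.2 then 0 else ((-1) ^+ s) ^+ t.1.1.

(* The two-dimensional representations [c |-> diag(i, -i)], [x |-> [[0, 1], [-2, 0]]],
   [y |-> (-1)^s [[0, i], [2i, 0]]]; they satisfy the defining relations of [H]. *)
Definition gmx := 'I_2 -> 'I_2 -> gauss.
Definition gmx_of (a b c d : gauss) : gmx :=
  fun i j => if i == ord0 then (if j == ord0 then a else b) else (if j == ord0 then c else d).
Definition gmx_mul (M N : gmx) : gmx :=
  fun i j => gadd (gmul (M i ord0) (N ord0 j)) (gmul (M i (ord2 1)) (N (ord2 1) j)).
Definition gmx1 : gmx := gmx_of (1, 0) (0, 0) (0, 0) (1, 0).
Definition repC : gmx := gmx_of (0, 1) (0, 0) (0, 0) (0, -1).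
Definition repX : gmx := gmx_of (0, 0) (1, 0) (-2, 0) (0, 0).
Definition repY (s : bool) : gmx :=
  gmx_of (0, 0) (0, (-1) ^+ s) (0, 2 * (-1) ^+ s) (0, 0).
Definition repG (s : bool) (t : HI) : gmx :=
  gmx_mul (gmx_mul (iter t.1.1 (gmx_mul repC) gmx1) (if t.1.2 then repX else gmx1))
          (if t.2 then repY s else gmx1).

(* Coefficient functions of the simple H-modules: the coradical of [H^*] is their span. *)
Definition coefG (j : corad_index) (t : HI) : gauss :=
  match j with
  | inl s => gint (chiZ s t)
  | inr (inl (m, n)) => repG false t m n
  | inr (inr (m, n)) => repG true t m n
  end.

(* Elements of [H] biorthogonal to the coefficient functions, up to the factor 8, as lists of
   (coefficient, monomial [c^i x^a y^b]). *)
Definition dual_terms (j : corad_index) : seq (gauss * (nat * bool * bool)) :=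
  match j with
  | inl s => [seq ((2 * (-1) ^+ (s * i)%N, 0), (i, false, false)) | i <- iota 0 4]
  | inr (inl (m, n)) =>
    nth [::] [::
      [:: ((1, 0), (0, false, false)); ((0, -1), (1, false, false)); ((-1, 0), (2, false, false));
          ((0, 1), (2, true, true)); ((0, 1), (3, false, false)); ((1, 0), (3, true, true))];
      [:: ((0, 2), (2, false, true)); ((-2, 0), (2, true, false)); ((2, 0), (3, false, true));
          ((0, 2), (3, true, false))];
      [:: ((0, 1), (2, false, true)); ((1, 0), (2, true, false)); ((-1, 0), (3, false, true));
          ((0, 1), (3, true, false))];
      [:: ((1, 0), (0, false, false)); ((0, 1), (1, false, false)); ((-1, 0), (2, false, false));
          ((0, -1), (2, true, true)); ((0, -1), (3, false, false)); ((1, 0), (3, true, true))]]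
      (2 * m + n)
  | inr (inr (m, n)) =>
    nth [::] [::
      [:: ((1, 0), (0, false, false)); ((0, -1), (1, false, false)); ((-1, 0), (2, false, false));
          ((0, -1), (2, true, true)); ((0, 1), (3, false, false)); ((-1, 0), (3, true, true))];
      [:: ((0, -2), (2, false, true)); ((-2, 0), (2, true, false)); ((-2, 0), (3, false, true));
          ((0, 2), (3, true, false))];
      [:: ((0, -1), (2, false, true)); ((1, 0), (2, true, false)); ((1, 0), (3, false, true));
          ((0, 1), (3, true, false))];
      [:: ((1, 0), (0, false, false)); ((0, 1), (1, false, false)); ((-1, 0), (2, false, false));
          ((0, 1), (2, true, true)); ((0, -1), (3, false, false)); ((-1, 0), (3, true, true))]]
      (2 * m + n)
  end.

Definition dualG (j : corad_index) (t : HI) : gauss :=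
  gsum (dual_terms j) (fun cm => if t == (ord4 cm.2.1.1, cm.2.1.2, cm.2.2) then cm.1 else gint 0).

(* The Jacobson radical of [H] has basis [(1 + c^2) c^j z], [j < 2], [z] in [x, y, xy] (indexed by
   [r = 2 * index z + j]); [rad_coordZ r] is the coordinate of [c^j z]. *)
Definition rad_mono (r : nat) : HI :=
  (ord4 (r %% 2), r %/ 2 != 1, 0 < r %/ 2)%N.
Definition rad_basisZ (r : nat) (t : HI) : int :=
  ((t == rad_mono r) + (t == (ord4 (r %% 2 + 2), (rad_mono r).1.2, (rad_mono r).2)))%:R.
Definition rad_coordZ (r : nat) (t : HI) : int := (t == rad_mono r)%:R.

Definition hmulZ (u w : HI -> int) (t : HI) : int :=
  zsum allHI (fun p => zsum allHI (fun q => u p * w q * bmulZ p q t)).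

Definition chi_check := all (fun s => all (fun p => all (fun q =>
  zsum allHI (fun t => chiZ s t * bmulZ p q t) == chiZ s p * chiZ s q) allHI) allHI) bools.

Definition rep_check := all (fun s => all (fun m => all (fun n => all (fun p => all (fun q =>
  gsum allHI (fun t => gmul (repG s t m n) (gint (bmulZ p q t)))
  == gmx_mul (repG s p) (repG s q) m n)
  allHI) allHI) ords2) ords2) bools.

Definition rep_unit_check := all (fun s => all (fun m => all (fun n =>
  repG s hunit m n == gint (m == n)%:R) ords2) ords2) bools.

Definition biorth_check := all (fun a => all (fun b =>
  gsum allHI (fun t => gmul (coefG a t) (dualG b t)) == gint (8 * (a == b)%:R))
  all_corad_index) all_corad_index.

Definition dual_basis_check := all (fun t => all (fun t' =>
  gadd (gsum all_corad_index (fun a => gmul (dualG a t') (coefG a t)))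
       (gint (8 * zsum (iota 0 6) (fun r => rad_basisZ r t' * rad_coordZ r t)))
  == gint (8 * (t' == t)%:R))
  allHI) allHI.

(* [J^2] lies in the span of [rad_basisZ 4], [rad_basisZ 5], which [J] annihilates. *)
Definition radical_check := all (fun r => all (fun r' => all (fun t =>
  hmulZ (rad_basisZ r') (rad_basisZ r) t ==
  (if (4 <= r)%N then 0 else hmulZ (rad_basisZ r') (rad_basisZ r) (rad_mono 4) * rad_basisZ 4 t
                           + hmulZ (rad_basisZ r') (rad_basisZ r) (rad_mono 5) * rad_basisZ 5 t))
  allHI) (iota 0 6)) (iota 0 6).

Lemma chi_checkP : chi_check. Proof. by vm_compute. Qed.
Lemma rep_checkP : rep_check. Proof. by vm_compute. Qed.
Lemma rep_unit_checkP : rep_unit_check. Proof. by vm_compute. Qed.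
Lemma biorth_checkP : biorth_check. Proof. by vm_compute. Qed.
Lemma dual_basis_checkP : dual_basis_check. Proof. by vm_compute. Qed.
Lemma radical_checkP : radical_check. Proof. by vm_compute. Qed.

(** * Grouplikes and coradical of [H^*] *)

Section Characters.
Variable k : fieldType.

Lemma chiE s t : chi k s t = (chiZ s t)%:~R.
Proof. by rewrite ffunE /chiZ; case: ifP; rewrite ?rmorphXn /= ?intr_sign. Qed.

Lemma chi_mult s : hmultiplicative (chi k s).
Proof.
move=> p q; have /allP/(_ s (mem_bools s))/allP/(_ p (mem_allHI p)) := chi_checkP.
move=> /allP/(_ q (mem_allHI q))/eqP/(congr1 (fun z : int => z%:~R : k)).
rewrite rmorphM /= intr_zsum -sum_allHI -!chiE => <-.
by apply: eq_bigr => t _; rewrite chiE bmulE rmorphM.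
Qed.

Lemma chi_grouplike s : grouplike (dualC k) (chi k s).
Proof. by apply/grouplike_dualP; split; [exact: chi_mult | rewrite ffunE]. Qed.

Lemma chi_inj : (2%:R : k) != 0 -> injective (chi k).
Proof.
move=> two_neq0; have one_neqN1 : (1 : k) != -1.
  by apply: contraNneq two_neq0; rewrite mulr2n => {2}->; rewrite subrr.
move=> [] [] // /ffunP/(_ (1, false, false)); rewrite !ffunE /= !expr1 expr0 => /eqP.
  by rewrite eq_sym (negbTE one_neqN1).
by rewrite (negbTE one_neqN1).
Qed.

Lemma chi_dualmul e a b : chi k (a (+) b) = dualmul e (chi k a) (chi k b).
Proof.
apply/ffunP => -[[i x] y]; rewrite dualmulE; try exact: chi_mult.
rewrite /deltaH !tens_eval_tmul ?tens_eval_iter ?tens_eval_tens; try exact: chi_mult.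
rewrite /hcpow /hone /hx /hy !dotv_bvec !ffunE /= expr0 !mulr1 !expr1 signr_addb.
by case: x; case: y; rewrite /= ?tens_evalD ?tens_eval_tens ?dotv_bvec ?ffunE /=;
  rewrite ?(mulr0, mul0r, addr0, mulr1, exprMn) //; exact: chi_mult.
Qed.

End Characters.

Section Coradical.
Variables (k : fieldType) (io : k).
Hypotheses (io2 : io ^+ 2 = -1) (two_neq0 : (2%:R : k) != 0).

Definition coef (j : corad_index) : cvec k HI := [ffun t => gI io (coefG j t)].
Definition coef_dual (j : corad_index) : cvec k HI := [ffun t => gI io (dualG j t)].
Definition rad_basis (r : nat) : cvec k HI := [ffun t => (rad_basisZ r t)%:~R].
Definition rad_coord (r : nat) : cvec k HI := [ffun t => (rad_coordZ r t)%:~R].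
Definition coradH : {vspace cvec k HI} := <<codom coef>>.

Definition rep_index (s : bool) (mn : 'I_2 * 'I_2) : corad_index :=
  if s then inr (inr mn) else inr (inl mn).

Lemma coef_chi s : coef (inl s) = chi k s.
Proof. by apply/ffunP => t; rewrite ffunE gI_int chiE. Qed.

Lemma dotv_coef_bmul j p q :
  dotv (coef j) (bmul k p q) = gI io (gsum allHI (fun t => gmul (coefG j t) (gint (bmulZ p q t)))).
Proof.
rewrite gI_gsum -sum_allHI; apply: eq_bigr => t _.
by rewrite ffunE bmulE (gI_mul io2) gI_int.
Qed.

Lemma coef_rep_comult s m n : cDelta (dualC k) (coef (rep_index s (m, n)))
  = \sum_l tens (coef (rep_index s (m, l))) (coef (rep_index s (l, n))).
Proof.
apply/ffunP => -[p q]; rewrite cDelta_dualE dotv_coef_bmul sum_ffunE big_ord_recr big_ord1.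
have /allP/(_ s (mem_bools s))/allP/(_ m (mem_ords2 m)) := rep_checkP.
move=> /allP/(_ n (mem_ords2 n))/allP/(_ p (mem_allHI p))/allP/(_ q (mem_allHI q))/eqP.
case: s => ->; rewrite /gmx_mul gI_add !(gI_mul io2) !ffunE /=.
all: by congr (_ * _ + _ * _); congr (gI io (repG _ _ _ _)); apply: val_inj.
Qed.

Lemma coef_rep_counit s m n : cEps (dualC k) (coef (rep_index s (m, n))) = (m == n)%:R.
Proof.
have /allP/(_ s (mem_bools s))/allP/(_ m (mem_ords2 m)) := rep_unit_checkP.
move=> /allP/(_ n (mem_ords2 n))/eqP; rewrite cEps_dualE ffunE.
by case: s => /= ->; rewrite gI_int; case: (m == n).
Qed.

Lemma coef_dual_biorth a b : dotv (coef a) (coef_dual b) = (a == b)%:R * 8%:R.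
Proof.
have /allP/(_ a (mem_all_corad_index a))/allP/(_ b (mem_all_corad_index b))/eqP := biorth_checkP.
move=> /(congr1 (gI io)); rewrite gI_gsum -sum_allHI gI_int => dotv8.
rewrite [RHS](_ : _ = (8 * (a == b)%:R : int)%:~R); last first.
  by case: (a == b); rewrite ?mulr1 ?mulr0 ?mul1r ?mul0r.
by rewrite -dotv8; apply: eq_bigr => t _; rewrite !ffunE (gI_mul io2).
Qed.

Lemma eight_neq0 : (8%:R : k) != 0.
Proof. by rewrite (_ : 8 = 2 * 2 * 2)%N // !natrM !mulf_neq0. Qed.

Lemma coef_free : free (codom coef).
Proof. exact: free_biorth eight_neq0 coef_dual_biorth. Qed.

Lemma coef_is_coalg_map : is_coalg_map (dualC k) (targetC k) coef.
Proof.
apply: is_coalg_map_sumC.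
  by apply: is_coalg_map_grpC => s; rewrite coef_chi; apply: chi_grouplike.
by apply: is_coalg_map_sumC; apply: is_coalg_map_matC => m n;
  [exact: (coef_rep_comult false) | exact: (coef_rep_counit false)
  | exact: (coef_rep_comult true) | exact: (coef_rep_counit true)].
Qed.

Lemma coradH_subcoalg : subcoalg (dualC k) coradH.
Proof.
apply: subcoalg_span => _ /codomP[j ->]; rewrite (proj1 coef_is_coalg_map).
by apply: memv_suml => P _; apply/memvZ/memv_tens; apply/memv_span/codom_f.
Qed.

Lemma rep_coef_span_simple s :
  simple_subcoalg (dualC k) <<codom (fun mn => coef (rep_index s mn))>>.
Proof.
apply: (@comatrix_span_simple _ _ _ 1 _ (fun mn => coef_dual (rep_index s mn)) _ eight_neq0).
  exact: coef_rep_comult.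
have rep_inj : injective (rep_index s) by case: s => a b [].
by move=> a b; rewrite coef_dual_biorth (inj_eq rep_inj).
Qed.

Lemma coef_in_simple j : exists2 T, simple_subcoalg (dualC k) T & coef j \in T.
Proof.
case: j => [s|[mn|mn]].
- exists <[coef (inl s)]>%VS; last exact: memv_line.
  apply: grouplike_line_simple; rewrite coef_chi; last by case: (chi_grouplike k s).
  by apply/eqP => /ffunP/(_ hunit); rewrite !ffunE /=; apply/eqP; rewrite oner_eq0.
- by exists <<codom (fun mn => coef (rep_index false mn))>>%VS;
    [exact: rep_coef_span_simple | exact/memv_span/codom_f].
- by exists <<codom (fun mn => coef (rep_index true mn))>>%VS;
    [exact: rep_coef_span_simple | exact/memv_span/codom_f].
Qed.

Lemma hmul_intE (u w : HI -> int) :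
  hmul [ffun t => (u t)%:~R : k] [ffun t => (w t)%:~R : k] = [ffun t => (hmulZ u w t)%:~R : k].
Proof.
apply/ffunP => t; rewrite /hmulZ sum_ffunE ffunE intr_zsum -sum_allHI; apply: eq_bigr => p _.
rewrite sum_ffunE intr_zsum -sum_allHI; apply: eq_bigr => q _.
by rewrite !ffunE bmulE scalerE !rmorphM.
Qed.

Lemma hmul_rad r r' : (r < 6)%N -> (r' < 6)%N ->
  hmul (rad_basis r') (rad_basis r) = if (4 <= r)%N then 0 else
    (hmulZ (rad_basisZ r') (rad_basisZ r) (rad_mono 4))%:~R *: rad_basis 4
    + (hmulZ (rad_basisZ r') (rad_basisZ r) (rad_mono 5))%:~R *: rad_basis 5.
Proof.
move=> r6 r'6; rewrite hmul_intE; apply/ffunP => t; rewrite ffunE.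
have /allP/(_ r)/(_ _)/allP/(_ r') := radical_checkP.
rewrite !mem_iota r6 r'6 => /(_ isT isT)/allP/(_ t (mem_allHI t))/eqP ->.
by case: (4 <= r)%N; rewrite !ffunE //= rmorphD !rmorphM.
Qed.

Lemma dotv_hmul_rad f r r' : (r < 6)%N -> (r' < 6)%N ->
    (4 <= r)%N || (dotv f (rad_basis 4) == 0) && (dotv f (rad_basis 5) == 0) ->
  dotv f (hmul (rad_basis r') (rad_basis r)) = 0.
Proof.
move=> r6 r'6; rewrite hmul_rad //; case: (4 <= r)%N => /= [_|/andP[/eqP f4 /eqP f5]].
  by rewrite /dotv big1 // => t _; rewrite ffunE mulr0.
by rewrite dotvD !dotvZ f4 f5 !mulr0 addr0.
Qed.

Lemma coef_rad_dual_basis g :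
  8%:R *: g = \sum_a dotv g (coef_dual a) *: coef a
              + \sum_(r < 6) dotv g (rad_basis r) *: (8%:R *: rad_coord r).
Proof.
pose F (b : corad_index + 'I_6) := match b with inl a => coef a | inr r => 8%:R *: rad_coord r end.
pose D (b : corad_index + 'I_6) := match b with inl a => coef_dual a | inr r => rad_basis r end.
rewrite (@dual_basis_expansion _ _ _ F D) ?big_sumType // => t t'.
have /allP/(_ t (mem_allHI t))/allP/(_ t' (mem_allHI t'))/eqP := dual_basis_checkP.
move=> /(congr1 (gI io)); rewrite gI_add gI_gsum -sum_all_corad_index !gI_int => dual.
rewrite big_sumType; rewrite [RHS](_ : _ = (8 * (t' == t)%:R : int)%:~R); last first.
  by case: (t' == t); rewrite ?mulr1 ?mulr0.
rewrite -dual; congr (_ + _).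
  by apply: eq_bigr => a _; rewrite !ffunE (gI_mul io2).
rewrite rmorphM /= intr_zsum mulr_sumr.
rewrite -(big_mkord xpredT (fun r : nat => rad_basis r t' * (8%:R *: rad_coord r) t)).
by apply: eq_bigr => r _; rewrite !ffunE scalerE rmorphM /=; ring.
Qed.

Lemma ann_rad_in_coradH g : (forall r, (r < 6)%N -> dotv g (rad_basis r) = 0) -> g \in coradH.
Proof.
move=> gJ; rewrite -[g](scalerK eight_neq0) coef_rad_dual_basis.
rewrite [X in _ + X]big1 ?addr0 => [|r _]; last by rewrite gJ ?scale0r.
by apply/memvZ/memv_suml => a _; apply/memvZ/memv_span/codom_f.
Qed.

(* A nonzero element of a subcoalgebra either kills the radical [J], or some translate of it by an
   element of [J] does: the translate by [J_r] pairs [J] with [f (J J_r)], and [J^2] lies in the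
   part of [J] annihilated by [J]. *)
Lemma subcoalg_meets_coradH T : subcoalg (dualC k) T -> T != 0%VS -> (T :&: coradH)%VS != 0%VS.
Proof.
move=> subT T_neq0; set f := vpick T; have fT : f \in T := memv_pick T.
suff [g [gT g_neq0 gJ]] :
    exists g, [/\ g \in T, g != 0 & forall r, (r < 6)%N -> dotv g (rad_basis r) = 0].
  apply: contra g_neq0 => /eqP TR0.
  have : g \in (T :&: coradH)%VS by rewrite memv_cap gT ann_rad_in_coradH.
  by rewrite TR0 memv0.
have translate r : (r < 6)%N -> dotv f (rad_basis r) != 0 ->
    (4 <= r)%N || (dotv f (rad_basis 4) == 0) && (dotv f (rad_basis 5) == 0) ->
  exists g, [/\ g \in T, g != 0 & forall r', (r' < 6)%N -> dotv g (rad_basis r') = 0].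
  move=> r6 fr top; exists (contractR (dualC k) (rad_basis r) f); split.
  - exact: memv_contractR.
  - by apply: contraNneq fr => g0; rewrite -contractR_dual_unit g0 ffunE.
  - by move=> r' r'6; rewrite dotv_contractR_dual dotv_hmul_rad.
have [f5|f5] := eqVneq (dotv f (rad_basis 5)) 0; last exact: (translate 5).
have [f4|f4] := eqVneq (dotv f (rad_basis 4)) 0; last exact: (translate 4).
have [r fr|fJ] := pickP (fun r : 'I_6 => dotv f (rad_basis r) != 0).
  by apply: (translate r) => //; rewrite f4 f5 eqxx orbT.
exists f; split=> [//||r r6]; first by rewrite vpick0.
by have /negbFE/eqP := fJ (Ordinal r6).
Qed.

Lemma coradH_is_coradical : is_coradical (dualC k) coradH.
Proof.
apply: is_coradical_span => [_ /codomP[j ->]|]; first exact: coef_in_simple.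
exact: simple_sub_meet coradH_subcoalg subcoalg_meets_coradH.
Qed.

End Coradical.

Theorem mainTheorem13 (k : closedFieldType) (chark : [pchar k] =i pred0)
  (e : 'I_4) (he : (val e == 1)%N || (val e == 3)%N) :
  (exists phi : bool -> cvec k HI,
     [/\ injective phi,
         (forall g, grouplike (dualC k) g <-> exists b, g = phi b) &
         (forall a b, phi (addb a b) = dualmul e (phi a) (phi b))]) /\
  (exists R : {vspace cvec k HI},
     is_coradical (dualC k) R /\ coalg_iso_onto (dualC k) R (targetC k)).
Proof.
have two_neq0 : (2%:R : k) != 0 by have := chark 2; rewrite !inE /= => ->.
have [io io2] : exists io : k, io ^+ 2 = -1.
  have [z z2] := @solve_monicpoly k 2 (fun i => if i == 0%N then -1 else 0) isT.
  by exists z; rewrite z2 big_ord_recr big_ord1 /= mul0r addr0 expr0 mulr1.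
split.
- exists (chi k); split; [exact: chi_inj | move=> g; split | exact: chi_dualmul].
    by move=> /grouplike_dualP[g_mult g1]; exact: grouplike_dual_chi.
  by move=> [s ->]; exact: chi_grouplike.
- exists (coradH io); split; first exact: coradH_is_coradical.
  by apply: coalg_iso_ontoP; [exact: coef_free | exact: coef_is_coalg_map].
Qed.
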